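(* Let $B$ be a board with set of sinks $S$. If the extended full tilt graph $\hat G_F(B)$ (with sinks $S$) contains an arborescence of weight $w$ converging to its root, then the extended large tilt graph $\hat G_L(B,S)$ contains an arborescence of weight at most $w$ converging to its root.
   Context: Pixels are unit squares indexed by $\mathbb{Z}^2$. A board $B=(V,E)$ is a finite subgraph of the square grid graph on $\mathbb{Z}^2$; its boundary consists of pixel sides not shared with a neighbouring pixel joined by an edge of $E$. $S\subseteq V$ are sinks. For a pixel $p$, its row (column) segment is the maximal set of pixels reachable from $p$ using only horizontal (vertical) edges of $E$; $p^\ell,p^r$ are the leftmost/rightmost pixels of its row segment and $p^u,p^d$ the topmost/bottommost pixels of its column segment. The full tilt graph $G_F(B)$ has vertex set $V$ and edges $(p,p^x)$ for $x\in\{\ell,r,u,d\}$, $p^x\ne p$. A corner pixel is a pixel $p$ with $p=p^x=p^y$ for some $x\in\{\ell,r\}$, $y\in\{u,d\}$. The large tilt graph $G_L(B,S)$ is the subgraph of $G_F(B)$ induced by the vertex set consisting of (i) all pixels reachable in $G_F(B)$ from corner pixels, (ii) every sink $s$ and $s^\ell,s^r,s^u,s^d$, (iii) for every reflex corner of the boundary, the endpoints of the row and column segments of the pixels incident to that corner, (iv) all pixels on the intersection of a row segment and a column segment each containing a pixel included in (i)–(iii). Extended graph: for a directed graph $G$ with sinks $S$, $\hat G$ has vertex set $V(G)\cup\{r\}$ with new root $r$ and edges: every edge of $G$ with weight $0$; for every edge $(p,q)$ of $G$ with $(q,p)$ not an edge of $G$, the inverse edge $(q,p)$ with weight $1$;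 and $(s,r)$ with weight $0$ for $s\in S$. An arborescence converging to $r$ is a spanning subgraph in which every vertex other than $r$ has exactly one outgoing edge and a directed path to $r$; its weight is the sum of its edge weights. *)

From mathcomp Require Import all_boot all_algebra.
Set Implicit Arguments. Unset Strict Implicit. Unset Printing Implicit Defensive.
Import GRing.Theory Num.Theory.
Local Open Scope ring_scope.

(* A pixel (x,y) is the unit square [x,x+1] x [y,y+1]; "up" means y+1. *)
Definition pixel := (int * int)%type.

Definition east  (p : pixel) : pixel := (p.1 + 1, p.2).
Definition west  (p : pixel) : pixel := (p.1 - 1, p.2).
Definition north (p : pixel) : pixel := (p.1, p.2 + 1).
Definition south (p : pixel) : pixel := (p.1, p.2 - 1).

(* A board: finite vertex set V (a list), horizontal edges hE p = edge between
   p and east p, vertical edges vE p = edge between p and north p.  Being a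
   subgraph of the grid graph is the hypothesis [is_board]. *)
Record board := Board { bV : seq pixel; hE : pred pixel; vE : pred pixel }.

Definition is_board (B : board) : Prop :=
  (forall p, hE B p -> (p \in bV B) /\ (east p \in bV B)) /\
  (forall p, vE B p -> (p \in bV B) /\ (north p \in bV B)).

(* Walking along edges; the fuel size V suffices since the walked pixels are
   pairwise distinct vertices of V. *)
Fixpoint walk (step : pixel -> pixel) (ok : pixel -> bool) (n : nat) (p : pixel)
  : pixel :=
  match n with
  | O => p
  | S n' => if ok p then walk step ok n' (step p) else p
  end.

Definition ptL (B : board) p := walk west  (fun q => hE B (west q))  (size (bV B)) p.
Definition ptR (B : board) p := walk east  (hE B)                    (size (bV B)) p.
Definition ptU (B : board) p := walk north (vE B)                    (size (bV B)) p.
Definition ptD (B : board) p := walk south (fun q => vE B (south q)) (size (bV B)) p.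

Definition in_row_seg (B : board) (p q : pixel) : Prop :=
  q.2 = p.2 /\ (ptL B p).1 <= q.1 /\ q.1 <= (ptR B p).1.
Definition in_col_seg (B : board) (p q : pixel) : Prop :=
  q.1 = p.1 /\ (ptD B p).2 <= q.2 /\ q.2 <= (ptU B p).2.

Definition fedge (B : board) (p q : pixel) : Prop :=
  p \in bV B /\ q \in [:: ptL B p; ptR B p; ptU B p; ptD B p] /\ q <> p.

Definition corner_pixel (B : board) (p : pixel) : Prop :=
  p \in bV B /\ (p = ptL B p \/ p = ptR B p) /\ (p = ptU B p \/ p = ptD B p).

Definition freach (B : board) (a q : pixel) : Prop :=
  exists s : seq pixel,
    (forall i, (i < size s)%N -> fedge B (nth a (a :: s) i) (nth a s i)) /\
    last a s = q.

(* Lattice point c = (a,b) is the common corner of the pixels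
   NE=(a,b), NW=(a-1,b), SW=(a-1,b-1), SE=(a,b-1). *)
Definition qNE (c : int * int) : pixel := c.
Definition qNW (c : int * int) : pixel := (c.1 - 1, c.2).
Definition qSW (c : int * int) : pixel := (c.1 - 1, c.2 - 1).
Definition qSE (c : int * int) : pixel := (c.1, c.2 - 1).

(* the four pixel sides emanating from c: joined = an edge of E crosses it *)
Definition j1 (B : board) c := hE B (qNW c).  (* NW - NE *)
Definition j2 (B : board) c := vE B (qSW c).  (* SW - NW *)
Definition j3 (B : board) c := hE B (qSW c).  (* SW - SE *)
Definition j4 (B : board) c := vE B (qSE c).  (* SE - NE *)

Definition bside (B : board) (X Y : pixel) (joined : bool) : Prop :=
  ((X \in bV B) \/ (Y \in bV B)) /\ ~~ joined.

(* reflex corner: c is a boundary vertex (some boundary side ends at c) at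
   which some interior sector has angle > 180 degrees, i.e. contains three
   cyclically consecutive pixels joined by edges. *)
Definition reflex_corner (B : board) (c : int * int) : Prop :=
  (bside B (qNW c) (qNE c) (j1 B c) \/ bside B (qSW c) (qNW c) (j2 B c) \/
   bside B (qSW c) (qSE c) (j3 B c) \/ bside B (qSE c) (qNE c) (j4 B c)) /\
  ((j1 B c && j2 B c) \/ (j2 B c && j3 B c) \/ (j3 B c && j4 B c) \/
   (j4 B c && j1 B c)).

Definition incident (B : board) (c : int * int) (p : pixel) : Prop :=
  p \in bV B /\ p \in [:: qNE c; qNW c; qSW c; qSE c].

Definition L0 (B : board) (S : seq pixel) (q : pixel) : Prop :=
  (exists c, corner_pixel B c /\ freach B c q) \/
  (exists s, s \in S /\ q \in [:: s; ptL B s; ptR B s; ptU B s; ptD B s]) \/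
  (exists c p, reflex_corner B c /\ incident B c p /\
               q \in [:: ptL B p; ptR B p; ptU B p; ptD B p]).

Definition Lvert (B : board) (S : seq pixel) (q : pixel) : Prop :=
  q \in bV B /\
  (L0 B S q \/
   exists a b, L0 B S a /\ L0 B S b /\ in_row_seg B a q /\ in_col_seg B b q).

(* A directed graph on pixels: vertex predicate vs and edge relation e
   (edges are only taken between vertices).  The root r is None. *)
Definition ext_edge (vs : pixel -> Prop) (e : pixel -> pixel -> Prop)
  (S : seq pixel) (u v : option pixel) (k : nat) : Prop :=
  match u, v with
  | Some p, Some q => vs p /\ vs q /\
        ((e p q /\ k = 0%N) \/ (~ e p q /\ e q p /\ k = 1%N))
  | Some s, None => vs s /\ s \in S /\ k = 0%N
  | _, _ => False
  end.

Definition pstep (par : pixel -> option pixel) (o : option pixel) :=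
  if o is Some p then par p else None.

(* par p = the head of the unique outgoing edge of p *)
Definition is_arborescence (vs : pixel -> Prop) (e : pixel -> pixel -> Prop)
  (S : seq pixel) (par : pixel -> option pixel) : Prop :=
  forall p, vs p ->
    (exists k, ext_edge vs e S (Some p) (par p) k) /\
    (exists n, iter n (pstep par) (Some p) = None).

Definition arb_weight (vs : pixel -> Prop) (e : pixel -> pixel -> Prop)
  (S : seq pixel) (par : pixel -> option pixel) (w : nat) : Prop :=
  exists (Ws : seq pixel) (wt : pixel -> nat),
    uniq Ws /\ (forall p, p \in Ws <-> vs p) /\
    (forall p, vs p -> ext_edge vs e S (Some p) (par p) (wt p)) /\
    w = (\sum_(p <- Ws) wt p)%N.

Definition GF_vert (B : board) (p : pixel) : Prop := p \in bV B.

(* Let L0 be the pixels of items (i)-(iii).  A pixel is a vertex of G_L exactly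
   when both its row segment and its column segment meet L0.  If the column
   segment of a pixel misses L0, the pixel has a west neighbour whose column
   segment is the translate of its own: otherwise a corner pixel or a reflex
   corner would put a pixel of L0 on that column.  Hence the map [retract],
   sending v to the pixel whose abscissa is that of the nearest pixel at or west
   of v whose column meets L0, and whose ordinate is that of the nearest pixel
   at or south of v whose row meets L0, fixes G_L pointwise and commutes with
   the four tilts, so it maps every edge of G_F to an edge of G_L or collapses it.
   Contract an arborescence of the extended G_F along it: each vertex p of G_L
   takes as parent the image of the parent of a preimage of p closest to the
   root.  The new edges are images of distinct old edges, and such an image is
   an inverse edge only if the old edge was one, so the weight does not grow. *)

From mathcomp Require Import all_boot all_algebra zify.
From Stdlib Require Import ClassicalEpsilon.
Set Implicit Arguments. Unset Strict Implicit. Unset Printing Implicit Defensive.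
Import GRing.Theory Num.Theory.

(** * Contracting an arborescence along a retraction *)

Definition asbool (P : Prop) : bool :=
  if excluded_middle_informative P then true else false.

Lemma asboolP (P : Prop) : reflect P (asbool P).
Proof. by rewrite /asbool; case: excluded_middle_informative => h; constructor. Qed.

Lemma iter_pstepS (par : pixel -> option pixel) n v :
  iter n.+1 (pstep par) (Some v) = iter n (pstep par) (par v).
Proof. by rewrite iterSr. Qed.

Section ArborescenceRetraction.

Variables (vs L : pixel -> Prop) (e : pixel -> pixel -> Prop) (S : seq pixel).
Variable pi : pixel -> pixel.
Hypothesis L_vs : forall p, L p -> vs p.
Hypothesis S_L : forall s, s \in S -> L s.
Hypothesis pi_L : forall v, vs v -> L (pi v).
Hypothesis pi_id : forall p, L p -> pi p = p.
Hypothesis pi_edge : forall v u, e v u -> pi v = pi u \/ e (pi v) (pi u).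

Section ContractArborescence.

Variables (par : pixel -> option pixel) (Ws : seq pixel) (wt : pixel -> nat).
Hypothesis par_root : forall v, vs v -> exists n, iter n (pstep par) (Some v) = None.
Hypothesis Ws_uniq : uniq Ws.
Hypothesis mem_Ws : forall p, p \in Ws <-> vs p.
Hypothesis par_edge : forall v, vs v -> ext_edge vs e S (Some v) (par v) (wt v).

Definition fiber_reaches_root (p : pixel) (n : nat) :=
  has (fun v => (pi v == p) && (iter n (pstep par) (Some v) == None)) Ws.

Definition depth (p : pixel) : nat :=
  match excluded_middle_informative (exists n, fiber_reaches_root p n) with
  | left h => ex_minn h
  | right _ => 0
  end.

Lemma depthP (p : pixel) : L p ->
  fiber_reaches_root p (depth p) /\
  forall v n, vs v -> pi v = p -> iter n (pstep par) (Some v) = None -> depth p <= n.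
Proof.
move=> Lp; rewrite /depth; case: excluded_middle_informative => [ex|[]]; last first.
  have [n hn] := par_root (L_vs Lp); exists n; apply/hasP; exists p.
    exact/mem_Ws/L_vs.
  by rewrite pi_id // eqxx hn.
case: ex_minnP => m hm m_min; split=> // v n vs_v pv hn; apply: m_min.
by apply/hasP; exists v; [exact/mem_Ws | rewrite pv eqxx hn].
Qed.

(* A preimage of [p] closest to the root: [depth] decreases along [par_retract]. *)
Definition rep (p : pixel) : pixel :=
  nth p Ws (find (fun v => (pi v == p) && (iter (depth p) (pstep par) (Some v) == None)) Ws).

Lemma repP (p : pixel) : L p ->
  [/\ vs (rep p), pi (rep p) = p & iter (depth p) (pstep par) (Some (rep p)) = None].
Proof.
move=> Lp; have [hit _] := depthP Lp.
have /andP[/eqP pi_rep /eqP rep_root] := nth_find p hit.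
by split=> //; apply/mem_Ws/mem_nth; rewrite -has_find.
Qed.

Definition par_retract (p : pixel) : option pixel := omap pi (par (rep p)).

Definition wt_retract (p : pixel) : nat :=
  if par (rep p) is Some u then (if asbool (e p (pi u)) then 0 else 1) else 0.

Lemma depth_par_retract (p u : pixel) : L p -> par (rep p) = Some u ->
  pi u <> p /\ depth (pi u) < depth p.
Proof.
move=> Lp par_rep; have [vs_rep _ rep_root] := repP Lp.
have vs_u : vs u by have := par_edge vs_rep; rewrite par_rep => -[_ []].
case def_d: (depth p) rep_root => [|m] //; rewrite iter_pstepS par_rep => u_root.
split; last by have [_ /(_ u m vs_u erefl u_root)] := depthP (pi_L vs_u).
by move=> pi_u; have [_ /(_ u m vs_u pi_u u_root)] := depthP Lp; rewrite def_d ltnn.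
Qed.

Lemma par_retract_edge (p : pixel) : L p ->
  ext_edge L e S (Some p) (par_retract p) (wt_retract p) /\ wt_retract p <= wt (rep p).
Proof.
move=> Lp; have [vs_rep pi_rep _] := repP Lp.
have := par_edge vs_rep; rewrite /par_retract /wt_retract.
case par_rep: (par (rep p)) => [u|] /=; last first.
  move=> [_ [rep_S ->]]; have rep_p : rep p = p by rewrite -{2}pi_rep pi_id //; apply: S_L.
  by rewrite rep_p in rep_S.
move=> [_ [vs_u rep_u]]; have [pi_u_neq _] := depth_par_retract Lp par_rep.
have Lu := pi_L vs_u.
case: asboolP => [e_pu | not_e_pu].
  by split=> //; split=> //; split=> //; left.
case: rep_u => [[/pi_edge] | [_ [/pi_edge]]]; rewrite pi_rep.
  by case=> [/esym | ].
by case=> // e_up ->; split=> //; split=> //; split=> //; right.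
Qed.

Lemma par_retract_root (p : pixel) : L p -> exists n, iter n (pstep par_retract) (Some p) = None.
Proof.
have [k] := ubnP (depth p); elim: k p => // k IH p; rewrite ltnS => lt_dk Lp.
case par_rep: (par (rep p)) => [u|]; last by exists 1; rewrite /= /par_retract par_rep.
have [vs_rep _ _] := repP Lp.
have vs_u : vs u by have := par_edge vs_rep; rewrite par_rep => -[_ []].
have [_ lt_depth] := depth_par_retract Lp par_rep.
have [n hn] := IH (pi u) (leq_trans lt_depth lt_dk) (pi_L vs_u).
by exists n.+1; rewrite iter_pstepS /par_retract par_rep.
Qed.

Lemma sum_wt_retract :
  \sum_(p <- [seq p <- Ws | asbool (L p)]) wt_retract p <= \sum_(v <- Ws) wt v.
Proof.
set Ls := [seq p <- Ws | _].
have L_Ls p : p \in Ls -> L p by rewrite mem_filter => /andP[/asboolP].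
apply: (@leq_trans (\sum_(p <- Ls) wt (rep p))).
  rewrite big_seq [X in _ <= X]big_seq; apply: leq_sum => p /L_Ls Lp.
  by have [] := par_retract_edge Lp.
rewrite -(big_map rep predT wt).
apply: (@uniq_sub_le_big _ addn _ leqnn (fun m n => leq_addr n m)).
- rewrite map_inj_in_uniq ?filter_uniq // => p1 p2 /L_Ls/repP[_ pi1 _] /L_Ls/repP[_ pi2 _].
  by rewrite -{2}pi1 -{2}pi2 => ->.
- exact: Ws_uniq.
- by move=> _ /mapP[p /L_Ls/repP[vs_rep _ _] ->]; apply/mem_Ws.
Qed.

End ContractArborescence.

Lemma arborescence_retract par w :
  is_arborescence vs e S par -> arb_weight vs e S par w ->
  exists par' w', is_arborescence L e S par' /\ arb_weight L e S par' w' /\ w' <= w.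
Proof.
move=> arb [Ws [wt [Ws_uniq [mem_Ws [par_edge ->]]]]].
have par_root v : vs v -> exists n, iter n (pstep par) (Some v) = None.
  by move=> /arb[].
have edge_retract := par_retract_edge par_root mem_Ws par_edge.
set Ls := [seq p <- Ws | asbool (L p)].
exists (par_retract par Ws), (\sum_(p <- Ls) wt_retract par Ws p); split; [|split].
- move=> p Lp; split; first by exists (wt_retract par Ws p); case: (edge_retract p Lp).
  exact: par_retract_root par_root mem_Ws par_edge p Lp.
- exists Ls, (wt_retract par Ws); split; first exact: filter_uniq.
  split; last by split=> // p Lp; case: (edge_retract p Lp).
  move=> p; rewrite mem_filter; split=> [/andP[/asboolP] //|Lp].
  by apply/andP; split; [exact/asboolP | exact/mem_Ws/L_vs].
- exact: sum_wt_retract par_root Ws_uniq mem_Ws par_edge.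
Qed.

End ArborescenceRetraction.

Local Open Scope ring_scope.

(** * Walks along an axis *)

Lemma walk_iter (step : pixel -> pixel) (ok : pixel -> bool) m (p : pixel) :
  exists k, [/\ (k <= m)%N, walk step ok m p = iter k step p,
    forall i, (i < k)%N -> ok (iter i step p) & (k < m)%N -> ~~ ok (iter k step p)].
Proof.
elim: m p => [|m IH] p; first by exists 0%N.
rewrite /=; case ok_p: (ok p); last by exists 0%N; rewrite ok_p.
have [k [le_km -> ok_k stop_k]] := IH (step p).
exists k.+1; split; rewrite ?iterSr //.
by case=> [|i] //; rewrite ltnS iterSr => /ok_k.
Qed.

Section WalkAlongAxis.

Variables (step : pixel -> pixel) (ok : pixel -> bool) (f g : pixel -> int).
Variable V : seq pixel.
Hypothesis f_step : forall q, f (step q) = f q + 1.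
Hypothesis g_step : forall q, g (step q) = g q.
Hypothesis fg_inj : forall q1 q2, f q1 = f q2 -> g q1 = g q2 -> q1 = q2.
Hypothesis step_V : forall q, q \in V -> ok q -> step q \in V.

Local Notation W p := (walk step ok (size V) p).

Lemma walk_end (p : pixel) : p \in V ->
  [/\ g (W p) = g p, f p <= f (W p),
    forall q, g q = g p -> f p <= f q -> f q < f (W p) -> ok q,
    forall q, g q = g p -> f p <= f q -> f q <= f (W p) -> q \in V &
    ~~ ok (W p)].
Proof.
move=> Vp; have [k [le_k_size -> ok_k stop_k]] := walk_iter step ok (size V) p.
have iter_fg i : f (iter i step p) = f p + i%:Z /\ g (iter i step p) = g p.
  by elim: i => [|i [IHf IHg]] /=; rewrite ?addr0 // f_step g_step IHf IHg; split=> //; lia.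
have iter_V i : (i <= k)%N -> iter i step p \in V.
  elim: i => [|i IH] // lt_ik /=; apply: step_V; [exact/IH/ltnW | exact: ok_k].
(* the fuel [size V] is never exhausted: the [k.+1] pixels visited are distinct *)
have lt_k_size : (k < size V)%N.
  rewrite ltn_neqAle le_k_size andbT; apply/negP => /eqP def_k.
  have : (size (mkseq (fun i => iter i step p) k.+1) <= size V)%N.
    apply: uniq_leq_size => [|x /mapP[i]]; last first.
      by rewrite mem_iota add0n => /andP[_ lt_ik] ->; apply: iter_V.
    rewrite mkseq_uniq // => i j /(congr1 f); rewrite (iter_fg i).1 (iter_fg j).1.
    by move=> eq_ij; apply/eqP; lia.
  by rewrite size_mkseq def_k ltnn.
have on_ray q : g q = g p -> f p <= f q ->
    q = iter (absz (f q - f p)) step p /\ (absz (f q - f p))%:Z = f q - f p.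
  move=> gq le_pq; have eq_d : (absz (f q - f p))%:Z = f q - f p by lia.
  split=> //; have [fi gi] := iter_fg (absz (f q - f p)).
  by apply: fg_inj; [rewrite fi eq_d; lia | rewrite gi].
have [fk gk] := iter_fg k; rewrite fk gk; split=> //; first lia.
- move=> q gq le_pq lt_qk; have [-> eq_d] := on_ray q gq le_pq; apply: ok_k; lia.
- move=> q gq le_pq le_qk; have [-> eq_d] := on_ray q gq le_pq; apply: iter_V; lia.
- exact: stop_k.
Qed.

Lemma walk_end_uniq (p r : pixel) : p \in V -> g r = g p -> f p <= f r ->
  (forall q, g q = g p -> f p <= f q -> f q < f r -> ok q) -> ~~ ok r ->
  W p = r.
Proof.
move=> Vp gr le_pr ok_r stop_r; have [gW le_pW ok_W _ stop_W] := walk_end Vp.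
apply: fg_inj; last by rewrite gW gr.
case: (ltrgtP (f (W p)) (f r)) => // [lt_Wr | lt_rW].
- by rewrite ok_r in stop_W.
- by rewrite ok_W in stop_r.
Qed.

End WalkAlongAxis.

(** * Tilts and segments *)

Lemma pixE (a b : pixel) : a.1 = b.1 -> a.2 = b.2 -> a = b.
Proof. by case: a b => ? ? [? ?] /= -> ->. Qed.

Lemma pixE_north (a b : pixel) : a.2 = b.2 -> a.1 = b.1 -> a = b.
Proof. by move=> e2 e1; apply: pixE. Qed.

Lemma pixE_west (a b : pixel) : - a.1 = - b.1 -> a.2 = b.2 -> a = b.
Proof. by move=> e1 e2; apply: pixE => //; lia. Qed.

Lemma pixE_south (a b : pixel) : - a.2 = - b.2 -> a.1 = b.1 -> a = b.
Proof. by move=> e2 e1; apply: pixE => //; lia. Qed.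

Lemma west_opp1 (q : pixel) : - (west q).1 = - q.1 + 1.
Proof. by rewrite /=; lia. Qed.

Lemma south_opp2 (q : pixel) : - (south q).2 = - q.2 + 1.
Proof. by rewrite /=; lia. Qed.

Lemma westS (x y : int) : west (x + 1, y) = (x, y).
Proof. by rewrite /west /= addrK. Qed.

Lemma southS (x y : int) : south (x, y + 1) = (x, y).
Proof. by rewrite /south /= addrK. Qed.

Section Board.

Variable B : board.
Hypothesis hB : is_board B.
Local Notation V := (bV B).

Let west_V q : q \in V -> hE B (west q) -> west q \in V.
Proof. by move=> _ /(hB.1 _) []. Qed.
Let east_V q : q \in V -> hE B q -> east q \in V.
Proof. by move=> _ /(hB.1 _) []. Qed.
Let south_V q : q \in V -> vE B (south q) -> south q \in V.
Proof. by move=> _ /(hB.2 _) []. Qed.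
Let north_V q : q \in V -> vE B q -> north q \in V.
Proof. by move=> _ /(hB.2 _) []. Qed.


Lemma ptR_spec (p : pixel) : p \in V ->
  [/\ (ptR B p).2 = p.2, p.1 <= (ptR B p).1,
    forall x, p.1 <= x -> x < (ptR B p).1 -> hE B (x, p.2),
    forall x, p.1 <= x -> x <= (ptR B p).1 -> (x, p.2) \in V &
    ~~ hE B (ptR B p)].
Proof.
move=> Vp; have [g_R le_R ok_R mem_R stop_R] :=
  walk_end (step := east) (f := fun q => q.1) (g := fun q => q.2)
    (fun _ => erefl) (fun _ => erefl) pixE east_V Vp.
by split=> // x le_x lt_x; [apply: ok_R | apply: mem_R].
Qed.

Lemma ptL_spec (p : pixel) : p \in V ->
  [/\ (ptL B p).2 = p.2, (ptL B p).1 <= p.1,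
    forall x, (ptL B p).1 <= x -> x < p.1 -> hE B (x, p.2),
    forall x, (ptL B p).1 <= x -> x <= p.1 -> (x, p.2) \in V &
    ~~ hE B (west (ptL B p))].
Proof.
move=> Vp; have [g_L le_L ok_L mem_L stop_L] :=
  walk_end (f := fun q => - q.1) (g := fun q => q.2) west_opp1 (fun _ => erefl) pixE_west west_V Vp.
rewrite -/(ptL B p) in g_L le_L ok_L mem_L stop_L.
split=> //; first lia.
- by move=> x le_x lt_x; rewrite -westS; apply: ok_L => /=; lia.
- by move=> x le_x lt_x; apply: mem_L => /=; lia.
Qed.

Lemma ptU_spec (p : pixel) : p \in V ->
  [/\ (ptU B p).1 = p.1, p.2 <= (ptU B p).2,
    forall y, p.2 <= y -> y < (ptU B p).2 -> vE B (p.1, y),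
    forall y, p.2 <= y -> y <= (ptU B p).2 -> (p.1, y) \in V &
    ~~ vE B (ptU B p)].
Proof.
move=> Vp; have [g_U le_U ok_U mem_U stop_U] :=
  walk_end (step := north) (f := fun q => q.2) (g := fun q => q.1)
    (fun _ => erefl) (fun _ => erefl) pixE_north north_V Vp.
by split=> // y le_y lt_y; [apply: ok_U | apply: mem_U].
Qed.

Lemma ptD_spec (p : pixel) : p \in V ->
  [/\ (ptD B p).1 = p.1, (ptD B p).2 <= p.2,
    forall y, (ptD B p).2 <= y -> y < p.2 -> vE B (p.1, y),
    forall y, (ptD B p).2 <= y -> y <= p.2 -> (p.1, y) \in V &
    ~~ vE B (south (ptD B p))].
Proof.
move=> Vp; have [g_D le_D ok_D mem_D stop_D] :=
  walk_end (f := fun q => - q.2) (g := fun q => q.1)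
    south_opp2 (fun _ => erefl) pixE_south south_V Vp.
rewrite -/(ptD B p) in g_D le_D ok_D mem_D stop_D.
split=> //; first lia.
- by move=> y le_y lt_y; rewrite -southS; apply: ok_D => /=; lia.
- by move=> y le_y lt_y; apply: mem_D => /=; lia.
Qed.

Lemma ptR_uniq (p r : pixel) : p \in V -> r.2 = p.2 -> p.1 <= r.1 ->
  (forall x, p.1 <= x -> x < r.1 -> hE B (x, p.2)) -> ~~ hE B r -> ptR B p = r.
Proof.
move=> Vp r2 le_pr ok_r stop_r.
apply: (walk_end_uniq (step := east) (f := fun q => q.1) (g := fun q => q.2)
  (fun _ => erefl) (fun _ => erefl) pixE east_V Vp) => // -[x y] /= -> *.
exact: ok_r.
Qed.

Lemma ptL_uniq (p l : pixel) : p \in V -> l.2 = p.2 -> l.1 <= p.1 ->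
  (forall x, l.1 <= x -> x < p.1 -> hE B (x, p.2)) -> ~~ hE B (west l) -> ptL B p = l.
Proof.
move=> Vp l2 le_lp ok_l stop_l.
apply: (walk_end_uniq (f := fun q => - q.1) (g := fun q => q.2)
  west_opp1 (fun _ => erefl) pixE_west west_V Vp) => //=; first lia.
by move=> -[x y] /= -> *; apply: ok_l => /=; lia.
Qed.

Lemma ptU_uniq (p u : pixel) : p \in V -> u.1 = p.1 -> p.2 <= u.2 ->
  (forall y, p.2 <= y -> y < u.2 -> vE B (p.1, y)) -> ~~ vE B u -> ptU B p = u.
Proof.
move=> Vp u1 le_pu ok_u stop_u.
apply: (walk_end_uniq (step := north) (f := fun q => q.2) (g := fun q => q.1)
  (fun _ => erefl) (fun _ => erefl) pixE_north north_V Vp) => // -[x y] /= -> *.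
exact: ok_u.
Qed.

Lemma ptD_uniq (p d : pixel) : p \in V -> d.1 = p.1 -> d.2 <= p.2 ->
  (forall y, d.2 <= y -> y < p.2 -> vE B (p.1, y)) -> ~~ vE B (south d) -> ptD B p = d.
Proof.
move=> Vp d1 le_dp ok_d stop_d.
apply: (walk_end_uniq (f := fun q => - q.2) (g := fun q => q.1)
  south_opp2 (fun _ => erefl) pixE_south south_V Vp) => //=; first lia.
by move=> -[x y] /= -> *; apply: ok_d => /=; lia.
Qed.

Lemma ptR_id (p : pixel) : p \in V -> ~~ hE B p -> ptR B p = p.
Proof. by move=> Vp stop_p; apply: ptR_uniq => // x *; lia. Qed.

Lemma ptL_id (p : pixel) : p \in V -> ~~ hE B (west p) -> ptL B p = p.
Proof. by move=> Vp stop_p; apply: ptL_uniq => // x *; lia. Qed.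

Lemma ptU_id (p : pixel) : p \in V -> ~~ vE B p -> ptU B p = p.
Proof. by move=> Vp stop_p; apply: ptU_uniq => // y *; lia. Qed.

Lemma ptD_id (p : pixel) : p \in V -> ~~ vE B (south p) -> ptD B p = p.
Proof. by move=> Vp stop_p; apply: ptD_uniq => // y *; lia. Qed.

Lemma hE_row_seg (p : pixel) x : p \in V ->
  (ptL B p).1 <= x -> x < (ptR B p).1 -> hE B (x, p.2).
Proof.
move=> Vp le_Lx lt_xR; have [_ _ hE_R _ _] := ptR_spec Vp; have [_ _ hE_L _ _] := ptL_spec Vp.
by case: (lerP p.1 x) => ?; [apply: hE_R | apply: hE_L].
Qed.

Lemma vE_col_seg (p : pixel) y : p \in V ->
  (ptD B p).2 <= y -> y < (ptU B p).2 -> vE B (p.1, y).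
Proof.
move=> Vp le_Dy lt_yU; have [_ _ vE_U _ _] := ptU_spec Vp; have [_ _ vE_D _ _] := ptD_spec Vp.
by case: (lerP p.2 y) => ?; [apply: vE_U | apply: vE_D].
Qed.

Lemma mem_row_seg (p q : pixel) : p \in V -> in_row_seg B p q -> q \in V.
Proof.
case: q => x y Vp [/= -> [le_Lx le_xR]].
have [_ _ _ mem_R _] := ptR_spec Vp; have [_ _ _ mem_L _] := ptL_spec Vp.
by case: (lerP p.1 x) => ?; [apply: mem_R | apply: mem_L => //; lia].
Qed.

Lemma mem_col_seg (p q : pixel) : p \in V -> in_col_seg B p q -> q \in V.
Proof.
case: q => x y Vp [/= -> [le_Dy le_yU]].
have [_ _ _ mem_U _] := ptU_spec Vp; have [_ _ _ mem_D _] := ptD_spec Vp.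
by case: (lerP p.2 y) => ?; [apply: mem_U | apply: mem_D => //; lia].
Qed.

Lemma ptR_row_seg (p : pixel) : p \in V -> in_row_seg B p (ptR B p).
Proof.
by move=> Vp; have [? ? _ _ _] := ptR_spec Vp; have [_ ? _ _ _] := ptL_spec Vp; split=> //; lia.
Qed.

Lemma ptL_row_seg (p : pixel) : p \in V -> in_row_seg B p (ptL B p).
Proof.
by move=> Vp; have [_ ? _ _ _] := ptR_spec Vp; have [? ? _ _ _] := ptL_spec Vp; split=> //; lia.
Qed.

Lemma ptU_col_seg (p : pixel) : p \in V -> in_col_seg B p (ptU B p).
Proof.
by move=> Vp; have [? ? _ _ _] := ptU_spec Vp; have [_ ? _ _ _] := ptD_spec Vp; split=> //; lia.
Qed.

Lemma ptD_col_seg (p : pixel) : p \in V -> in_col_seg B p (ptD B p).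
Proof.
by move=> Vp; have [_ ? _ _ _] := ptU_spec Vp; have [? ? _ _ _] := ptD_spec Vp; split=> //; lia.
Qed.

Lemma mem_tilts (p : pixel) : p \in V ->
  {subset [:: ptL B p; ptR B p; ptU B p; ptD B p] <= V}.
Proof.
move=> Vp q; rewrite !inE => /or4P[] /eqP ->.
- exact/(mem_row_seg Vp)/ptL_row_seg.
- exact/(mem_row_seg Vp)/ptR_row_seg.
- exact/(mem_col_seg Vp)/ptU_col_seg.
- exact/(mem_col_seg Vp)/ptD_col_seg.
Qed.

Lemma row_seg_ptR (p q : pixel) : p \in V -> in_row_seg B p q -> ptR B q = ptR B p.
Proof.
move=> Vp pq; have Vq := mem_row_seg Vp pq; case: pq => q2 [le_Lq le_qR].
have [R2 _ _ _ stop_R] := ptR_spec Vp.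
apply: ptR_uniq => //; first by rewrite R2.
by move=> x le_qx lt_xR; rewrite q2; apply: hE_row_seg => //; lia.
Qed.

Lemma row_seg_ptL (p q : pixel) : p \in V -> in_row_seg B p q -> ptL B q = ptL B p.
Proof.
move=> Vp pq; have Vq := mem_row_seg Vp pq; case: pq => q2 [le_Lq le_qR].
have [L2 _ _ _ stop_L] := ptL_spec Vp.
apply: ptL_uniq => //; first by rewrite L2.
by move=> x le_Lx lt_xq; rewrite q2; apply: hE_row_seg => //; lia.
Qed.

Lemma col_seg_ptU (p q : pixel) : p \in V -> in_col_seg B p q -> ptU B q = ptU B p.
Proof.
move=> Vp pq; have Vq := mem_col_seg Vp pq; case: pq => q1 [le_Dq le_qU].
have [U1 _ _ _ stop_U] := ptU_spec Vp.
apply: ptU_uniq => //; first by rewrite U1.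
by move=> y le_qy lt_yU; rewrite q1; apply: vE_col_seg => //; lia.
Qed.

Lemma col_seg_ptD (p q : pixel) : p \in V -> in_col_seg B p q -> ptD B q = ptD B p.
Proof.
move=> Vp pq; have Vq := mem_col_seg Vp pq; case: pq => q1 [le_Dq le_qU].
have [D1 _ _ _ stop_D] := ptD_spec Vp.
apply: ptD_uniq => //; first by rewrite D1.
by move=> y le_Dy lt_yq; rewrite q1; apply: vE_col_seg => //; lia.
Qed.

Lemma row_seg_east (p : pixel) : p \in V -> hE B p -> in_row_seg B p (east p).
Proof.
move=> Vp hE_p; have [R2 le_pR _ _ stop_R] := ptR_spec Vp; have [_ le_Lp _ _ _] := ptL_spec Vp.
split=> //=; split; first lia.
case: (ltrP p.1 (ptR B p).1) => [|le_Rp]; first lia.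
by move: stop_R; rewrite (_ : ptR B p = p) ?hE_p //; apply: pixE => //; lia.
Qed.

Lemma col_seg_north (p : pixel) : p \in V -> vE B p -> in_col_seg B p (north p).
Proof.
move=> Vp vE_p; have [U1 le_pU _ _ stop_U] := ptU_spec Vp; have [_ le_Dp _ _ _] := ptD_spec Vp.
split=> //=; split; first lia.
case: (ltrP p.2 (ptU B p).2) => [|le_Up]; first lia.
by move: stop_U; rewrite (_ : ptU B p = p) ?vE_p //; apply: pixE => //; lia.
Qed.

Lemma row_seg_westward (p q : pixel) : p \in V -> q.2 = p.2 -> q.1 <= p.1 ->
  (forall x, q.1 <= x -> x < p.1 -> hE B (x, p.2)) -> in_row_seg B p q.
Proof.
move=> Vp q2 le_qp hE_qp; have [L2 le_Lp _ _ stop_L] := ptL_spec Vp.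
have [_ le_pR _ _ _] := ptR_spec Vp; split=> //; split; last lia.
case: (lerP (ptL B p).1 q.1) => // lt_qL; move: stop_L.
by rewrite /west L2 hE_qp //; lia.
Qed.

Lemma col_seg_southward (p q : pixel) : p \in V -> q.1 = p.1 -> q.2 <= p.2 ->
  (forall y, q.2 <= y -> y < p.2 -> vE B (p.1, y)) -> in_col_seg B p q.
Proof.
move=> Vp q1 le_qp vE_qp; have [D1 le_Dp _ _ stop_D] := ptD_spec Vp.
have [_ le_pU _ _ _] := ptU_spec Vp; split=> //; split; last lia.
case: (lerP (ptD B p).2 q.2) => // lt_qD; move: stop_D.
by rewrite /south D1 vE_qp //; lia.
Qed.

Lemma row_seg_refl (p : pixel) : p \in V -> in_row_seg B p p.
Proof.
by move=> Vp; have [_ ? _ _ _] := ptR_spec Vp; have [_ ? _ _ _] := ptL_spec Vp.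
Qed.

Lemma col_seg_refl (p : pixel) : p \in V -> in_col_seg B p p.
Proof.
by move=> Vp; have [_ ? _ _ _] := ptU_spec Vp; have [_ ? _ _ _] := ptD_spec Vp.
Qed.

Lemma row_seg_sym (p q : pixel) : p \in V -> in_row_seg B p q -> in_row_seg B q p.
Proof.
move=> Vp pq; rewrite /in_row_seg (row_seg_ptR Vp pq) (row_seg_ptL Vp pq).
by case: pq => -> _; apply: row_seg_refl.
Qed.

Lemma col_seg_sym (p q : pixel) : p \in V -> in_col_seg B p q -> in_col_seg B q p.
Proof.
move=> Vp pq; rewrite /in_col_seg (col_seg_ptU Vp pq) (col_seg_ptD Vp pq).
by case: pq => -> _; apply: col_seg_refl.
Qed.

Lemma row_seg_trans (p q r : pixel) : p \in V ->
  in_row_seg B p q -> in_row_seg B q r -> in_row_seg B p r.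
Proof.
by move=> Vp pq; rewrite /in_row_seg (row_seg_ptR Vp pq) (row_seg_ptL Vp pq); case: pq => ->.
Qed.

Lemma col_seg_trans (p q r : pixel) : p \in V ->
  in_col_seg B p q -> in_col_seg B q r -> in_col_seg B p r.
Proof.
by move=> Vp pq; rewrite /in_col_seg (col_seg_ptU Vp pq) (col_seg_ptD Vp pq); case: pq => ->.
Qed.

End Board.

Lemma int_step (P : int -> bool) (lo hi : int) : lo <= hi -> ~~ P lo -> P hi ->
  exists y, [/\ lo <= y, y < hi, ~~ P y & P (y + 1)].
Proof.
move=> le_lh; have [n ->] : exists n : nat, hi = lo + n%:Z by exists (absz (hi - lo)); lia.
elim: n lo {le_lh} => [|n IH] lo nP_lo; first by rewrite addr0 (negbTE nP_lo).
case P_lo1: (P (lo + 1)) => P_hi; first by exists lo; split=> //; lia.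
have [|y [le_y lt_y nP_y P_y1]] := IH (lo + 1) (negbT P_lo1).
  by rewrite (_ : lo + 1 + n%:Z = lo + n.+1%:Z) //; lia.
by exists y; split=> //; lia.
Qed.

(** * Rows and columns meeting L0 *)

Section LargeTiltGraph.

Variables (B : board) (S : seq pixel).
Hypothesis hB : is_board B.
Hypothesis hS : {subset S <= bV B}.
Local Notation V := (bV B).

Definition L0_row (q : pixel) := exists2 a, L0 B S a & in_row_seg B a q.
Definition L0_col (q : pixel) := exists2 b, L0 B S b & in_col_seg B b q.

Lemma mem_L0 (a : pixel) : L0 B S a -> a \in V.
Proof.
case=> [[c [[Vc _] [s [s_edges <-]]]] | [[s' [s'S]] | [c [p [_ [[Vp _]]]]]]].
- case: s s_edges => [|x s] // s_edges; rewrite -nth_last.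
  by have [Vq [tilt _]] := s_edges (size s) (ltnSn _); apply: (mem_tilts hB Vq).
- by rewrite inE => /orP[/eqP -> | /(mem_tilts hB (hS s'S))]; first exact: hS.
- exact: (mem_tilts hB Vp).
Qed.

Lemma L0_row_trans (p q : pixel) : in_row_seg B p q -> L0_row p -> L0_row q.
Proof. by move=> pq [a La ap]; exists a => //; apply: row_seg_trans (mem_L0 La) ap pq. Qed.

Lemma L0_col_trans (p q : pixel) : in_col_seg B p q -> L0_col p -> L0_col q.
Proof. by move=> pq [b Lb bp]; exists b => //; apply: col_seg_trans (mem_L0 Lb) bp pq. Qed.

Lemma L0_row_seg (p q : pixel) : p \in V -> in_row_seg B p q -> L0_row q <-> L0_row p.
Proof.
move=> Vp pq; split; last exact: L0_row_trans.
by apply: L0_row_trans; apply: row_seg_sym.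
Qed.

Lemma L0_col_seg (p q : pixel) : p \in V -> in_col_seg B p q -> L0_col q <-> L0_col p.
Proof.
move=> Vp pq; split; last exact: L0_col_trans.
by apply: L0_col_trans; apply: col_seg_sym.
Qed.

Lemma LvertE (q : pixel) : Lvert B S q <-> [/\ q \in V, L0_row q & L0_col q].
Proof.
split=> [[Vq [Lq | [a [b [La [Lb [aq bq]]]]]]] | [Vq [a La aq] [b Lb bq]]].
- by split=> //; exists q => //; [apply: row_seg_refl | apply: col_seg_refl].
- by split=> //; [exists a | exists b].
- by split=> //; right; exists a, b.
Qed.

Lemma sink_Lvert (s : pixel) : s \in S -> Lvert B S s.
Proof. by move=> sS; split; [exact: hS | left; right; left; exists s; rewrite inE eqxx]. Qed.

Lemma corner_L0 (a : pixel) : corner_pixel B a -> L0 B S a.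
Proof. by move=> corner_a; left; exists a; split=> //; exists [::]. Qed.

Lemma reflex_cornerI (c : int * int) :
  [|| ~~ j1 B c && ((qNW c \in V) || (qNE c \in V)),
      ~~ j2 B c && ((qSW c \in V) || (qNW c \in V)),
      ~~ j3 B c && ((qSW c \in V) || (qSE c \in V)) |
      ~~ j4 B c && ((qSE c \in V) || (qNE c \in V))] ->
  [|| j1 B c && j2 B c, j2 B c && j3 B c, j3 B c && j4 B c | j4 B c && j1 B c] ->
  reflex_corner B c.
Proof.
move=> /or4P side /or4P sector; split.
  by case: side => /andP[? /orP ?]; [left | right; left | right; right; left | right; right; right].
by case: sector => ?; [left | right; left | right; right; left | right; right; right].
Qed.

Lemma L0_row_reflex (c : int * int) (p : pixel) :
  reflex_corner B c -> incident B c p -> L0_row p.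
Proof.
move=> rc [Vp inc]; exists (ptR B p); last exact/(row_seg_sym hB Vp)/ptR_row_seg.
by right; right; exists c, p; rewrite !inE eqxx !orbT.
Qed.

Lemma L0_col_reflex (c : int * int) (p : pixel) :
  reflex_corner B c -> incident B c p -> L0_col p.
Proof.
move=> rc [Vp inc]; exists (ptU B p); last exact/(col_seg_sym hB Vp)/ptU_col_seg.
by right; right; exists c, p; rewrite !inE eqxx !orbT.
Qed.

Ltac unfold_corner := rewrite /j1 /j2 /j3 /j4 /qNE /qNW /qSW /qSE /= ?addrK.

(* Going up the column of [z], either its top pixel is a corner pixel, or some
   pixel has a boundary side on its west while the pixel above it does not,
   and the lattice point between them is a reflex corner. *)
Lemma L0_col_west_boundary (z : pixel) : z \in V -> ~~ hE B (west z) -> L0_col z.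
Proof.
move=> Vz stop_z; have zt := ptU_col_seg hB Vz; have Vt := mem_col_seg hB Vz zt.
have [_ le_zt vE_zt _ stop_t] := ptU_spec hB Vz; have [_ le_Dz _ _ _] := ptD_spec hB Vz.
case: zt => t1 _; set t := ptU B z in t1 le_zt vE_zt stop_t Vt *.
case/boolP: (hE B (west t)) => [hE_t | west_t]; last first.
  exists t; first by apply: corner_L0; split=> //; split; left; [rewrite ptL_id | rewrite ptU_id].
  by apply: col_seg_sym => //; apply: ptU_col_seg.
have [y [le_zy lt_yt stop_y hE_y1]] :
    exists y, [/\ z.2 <= y, y < t.2, ~~ hE B (z.1 - 1, y) & hE B (z.1 - 1, y + 1)].
  by apply: int_step => //; rewrite -t1.
have zy : in_col_seg B z (z.1, y) by split=> //=; rewrite -/t; lia.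
have Vy := mem_col_seg hB Vz zy; have vE_y := vE_zt y le_zy lt_yt.
apply/(L0_col_seg Vz zy)/(L0_col_reflex (c := (z.1, y + 1))).
- by apply: reflex_cornerI; unfold_corner; rewrite ?(negbTE stop_y) ?hE_y1 ?vE_y ?Vy ?orbT.
- by split=> //; unfold_corner; rewrite !inE eqxx !orbT.
Qed.

Lemma L0_col_east_boundary (z : pixel) : z \in V -> ~~ hE B z -> L0_col z.
Proof.
move=> Vz stop_z; have zt := ptU_col_seg hB Vz; have Vt := mem_col_seg hB Vz zt.
have [_ le_zt vE_zt _ stop_t] := ptU_spec hB Vz; have [_ le_Dz _ _ _] := ptD_spec hB Vz.
case: zt => t1 _; set t := ptU B z in t1 le_zt vE_zt stop_t Vt *.
case/boolP: (hE B t) => [hE_t | east_t]; last first.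
  exists t; first by apply: corner_L0;
    split=> //; split; [right; rewrite ptR_id | left; rewrite ptU_id].
  by apply: col_seg_sym => //; apply: ptU_col_seg.
have [y [le_zy lt_yt stop_y hE_y1]] :
    exists y, [/\ z.2 <= y, y < t.2, ~~ hE B (z.1, y) & hE B (z.1, y + 1)].
  by apply: int_step => //; [rewrite -surjective_pairing | rewrite -t1 -surjective_pairing].
have zy : in_col_seg B z (z.1, y) by split=> //=; rewrite -/t; lia.
have Vy := mem_col_seg hB Vz zy; have vE_y := vE_zt y le_zy lt_yt.
apply/(L0_col_seg Vz zy)/(L0_col_reflex (c := (z.1 + 1, y + 1))).
- by apply: reflex_cornerI; unfold_corner; rewrite ?(negbTE stop_y) ?hE_y1 ?vE_y ?Vy ?orbT.
- by split=> //; unfold_corner; rewrite !inE eqxx !orbT.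
Qed.

Lemma L0_row_north_boundary (z : pixel) : z \in V -> ~~ vE B z -> L0_row z.
Proof.
move=> Vz stop_z; have zt := ptR_row_seg hB Vz; have Vt := mem_row_seg hB Vz zt.
have [_ le_zt hE_zt _ stop_t] := ptR_spec hB Vz; have [_ le_Lz _ _ _] := ptL_spec hB Vz.
case: zt => t2 _; set t := ptR B z in t2 le_zt hE_zt stop_t Vt *.
case/boolP: (vE B t) => [vE_t | north_t]; last first.
  exists t; first by apply: corner_L0;
    split=> //; split; [right; rewrite ptR_id | left; rewrite ptU_id].
  by apply: row_seg_sym => //; apply: ptR_row_seg.
have [x [le_zx lt_xt stop_x vE_x1]] :
    exists x, [/\ z.1 <= x, x < t.1, ~~ vE B (x, z.2) & vE B (x + 1, z.2)].
  by apply: int_step => //; [rewrite -surjective_pairing | rewrite -t2 -surjective_pairing].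
have zx : in_row_seg B z (x, z.2) by split=> //=; rewrite -/t; lia.
have Vx := mem_row_seg hB Vz zx; have hE_x := hE_zt x le_zx lt_xt.
apply/(L0_row_seg Vz zx)/(L0_row_reflex (c := (x + 1, z.2 + 1))).
- by apply: reflex_cornerI; unfold_corner; rewrite ?(negbTE stop_x) ?vE_x1 ?hE_x ?Vx ?orbT.
- by split=> //; unfold_corner; rewrite !inE eqxx !orbT.
Qed.

Lemma L0_row_south_boundary (z : pixel) : z \in V -> ~~ vE B (south z) -> L0_row z.
Proof.
move=> Vz stop_z; have zt := ptR_row_seg hB Vz; have Vt := mem_row_seg hB Vz zt.
have [_ le_zt hE_zt _ stop_t] := ptR_spec hB Vz; have [_ le_Lz _ _ _] := ptL_spec hB Vz.
case: zt => t2 _; set t := ptR B z in t2 le_zt hE_zt stop_t Vt *.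
case/boolP: (vE B (south t)) => [vE_t | south_t]; last first.
  exists t; first by apply: corner_L0;
    split=> //; split; [right; rewrite ptR_id | right; rewrite ptD_id].
  by apply: row_seg_sym => //; apply: ptR_row_seg.
have [x [le_zx lt_xt stop_x vE_x1]] :
    exists x, [/\ z.1 <= x, x < t.1, ~~ vE B (x, z.2 - 1) & vE B (x + 1, z.2 - 1)].
  by apply: int_step => //; rewrite -t2.
have zx : in_row_seg B z (x, z.2) by split=> //=; rewrite -/t; lia.
have Vx := mem_row_seg hB Vz zx; have hE_x := hE_zt x le_zx lt_xt.
apply/(L0_row_seg Vz zx)/(L0_row_reflex (c := (x + 1, z.2))).
- by apply: reflex_cornerI; unfold_corner; rewrite ?(negbTE stop_x) ?vE_x1 ?hE_x ?Vx ?orbT.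
- by split=> //; unfold_corner; rewrite !inE eqxx !orbT.
Qed.

Lemma no_L0_col_hE_west (z : pixel) : z \in V -> ~ L0_col z -> hE B (west z).
Proof. by move=> Vz nLz; apply/negPn/negP => /(L0_col_west_boundary Vz). Qed.

Lemma no_L0_row_vE_south (z : pixel) : z \in V -> ~ L0_row z -> vE B (south z).
Proof. by move=> Vz nLz; apply/negPn/negP => /(L0_row_south_boundary Vz). Qed.

(* A mismatch would make the north-west corner of [b] reflex. *)
Lemma no_L0_col_vE_west (b : pixel) : b \in V -> ~ L0_col b -> vE B (west b) = vE B b.
Proof.
move=> Vb nLb; have hE_b := no_L0_col_hE_west Vb nLb; have Vw := (hB.1 _ hE_b).1.
case/boolP: (vE B b) => [vE_b | stop_b].
  have bn := col_seg_north hB Vb vE_b.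
  have hE_n := no_L0_col_hE_west (mem_col_seg hB Vb bn) (fun h => nLb ((L0_col_seg Vb bn).1 h)).
  apply/negPn/negP => stop_w; apply: nLb.
  move: b Vb vE_b hE_b hE_n Vw stop_w {bn} => [x y] Vb vE_b hE_b hE_n Vw stop_w.
  apply: (L0_col_reflex (c := (x, y + 1)));
    last by split=> //; unfold_corner; rewrite !inE eqxx !orbT.
  by apply: reflex_cornerI; unfold_corner; rewrite ?(negbTE stop_w) ?hE_b ?hE_n ?vE_b ?Vw ?orbT.
apply/negbTE/negP => vE_w; apply: nLb.
move: b Vb stop_b hE_b vE_w {Vw} => [x y] Vb stop_b hE_b vE_w.
apply: (L0_col_reflex (c := (x, y + 1)));
  last by split=> //; unfold_corner; rewrite !inE eqxx !orbT.
by apply: reflex_cornerI; unfold_corner; rewrite ?(negbTE stop_b) ?hE_b ?vE_w ?Vb ?orbT.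
Qed.

Lemma no_L0_col_south_west (d : pixel) : d \in V -> ~ L0_col d ->
  ~~ vE B (south d) -> ~~ vE B (south (west d)).
Proof.
move=> Vd nLd stop_d; have hE_d := no_L0_col_hE_west Vd nLd.
apply/negP => vE_w; apply: nLd; move: d Vd stop_d hE_d vE_w => [x y] Vd stop_d hE_d vE_w.
apply: (L0_col_reflex (c := (x, y))); last by split=> //; unfold_corner; rewrite !inE eqxx.
by apply: reflex_cornerI; unfold_corner; rewrite ?(negbTE stop_d) ?hE_d ?vE_w ?Vd ?orbT.
Qed.

Lemma no_L0_row_hE_south (b : pixel) : b \in V -> ~ L0_row b -> hE B (south b) = hE B b.
Proof.
move=> Vb nLb; have vE_b := no_L0_row_vE_south Vb nLb; have Vs := (hB.2 _ vE_b).1.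
case/boolP: (hE B b) => [hE_b | stop_b].
  have be := row_seg_east hB Vb hE_b.
  have vE_e := no_L0_row_vE_south (mem_row_seg hB Vb be) (fun h => nLb ((L0_row_seg Vb be).1 h)).
  apply/negPn/negP => stop_s; apply: nLb.
  move: b Vb hE_b vE_b vE_e Vs stop_s {be} => [x y] Vb hE_b vE_b vE_e Vs stop_s.
  apply: (L0_row_reflex (c := (x + 1, y)));
    last by split=> //; unfold_corner; rewrite !inE eqxx !orbT.
  by apply: reflex_cornerI; unfold_corner; rewrite ?(negbTE stop_s) ?hE_b ?vE_b ?vE_e ?Vs ?orbT.
apply/negbTE/negP => hE_s; apply: nLb.
move: b Vb stop_b vE_b hE_s {Vs} => [x y] Vb stop_b vE_b hE_s.
apply: (L0_row_reflex (c := (x + 1, y)));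
  last by split=> //; unfold_corner; rewrite !inE eqxx !orbT.
by apply: reflex_cornerI; unfold_corner; rewrite ?(negbTE stop_b) ?vE_b ?hE_s ?Vb ?orbT.
Qed.

Lemma no_L0_row_west_south (l : pixel) : l \in V -> ~ L0_row l ->
  ~~ hE B (west l) -> ~~ hE B (west (south l)).
Proof.
move=> Vl nLl stop_l; have vE_l := no_L0_row_vE_south Vl nLl.
apply/negP => hE_s; apply: nLl; move: l Vl stop_l vE_l hE_s => [x y] Vl stop_l vE_l hE_s.
apply: (L0_row_reflex (c := (x, y))); last by split=> //; unfold_corner; rewrite !inE eqxx.
by apply: reflex_cornerI; unfold_corner; rewrite ?(negbTE stop_l) ?vE_l ?hE_s ?Vl ?orbT.
Qed.

Lemma no_L0_col_shift_west (a : pixel) : a \in V -> ~ L0_col a ->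
  [/\ west a \in V, ptU B (west a) = west (ptU B a) & ptD B (west a) = west (ptD B a)].
Proof.
move=> Va nLa; have Vw := (hB.1 _ (no_L0_col_hE_west Va nLa)).1.
have nL_col q : in_col_seg B a q -> q \in V /\ ~ L0_col q.
  by move=> aq; split; [apply: mem_col_seg Va aq | move/(L0_col_seg Va aq)].
have [U1 le_aU vE_U _ stop_U] := ptU_spec hB Va; have [D1 le_Da vE_D _ stop_D] := ptD_spec hB Va.
have vE_west y : (ptD B a).2 <= y -> y <= (ptU B a).2 -> vE B (west (a.1, y)) = vE B (a.1, y).
  move=> le_Dy le_yU; have [Vy nLy] := nL_col (a.1, y) (conj erefl (conj le_Dy le_yU)).
  exact: no_L0_col_vE_west.
split=> //.
- apply: ptU_uniq => //=; first by rewrite U1.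
    by move=> y le_ay lt_yU; rewrite [vE B _]vE_west; [apply: vE_U | lia | lia].
  have [VU nLU] := nL_col _ (ptU_col_seg hB Va).
  by rewrite no_L0_col_vE_west.
- apply: ptD_uniq => //=; first by rewrite D1.
    by move=> y le_Dy lt_ya; rewrite [vE B _]vE_west; [apply: vE_D | lia | lia].
  have [VD nLD] := nL_col _ (ptD_col_seg hB Va).
  exact: no_L0_col_south_west.
Qed.

Lemma no_L0_row_shift_south (a : pixel) : a \in V -> ~ L0_row a ->
  [/\ south a \in V, ptL B (south a) = south (ptL B a) & ptR B (south a) = south (ptR B a)].
Proof.
move=> Va nLa; have Vs := (hB.2 _ (no_L0_row_vE_south Va nLa)).1.
have nL_row q : in_row_seg B a q -> q \in V /\ ~ L0_row q.
  by move=> aq; split; [apply: mem_row_seg Va aq | move/(L0_row_seg Va aq)].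
have [R2 le_aR hE_R _ stop_R] := ptR_spec hB Va; have [L2 le_La hE_L _ stop_L] := ptL_spec hB Va.
have hE_south x : (ptL B a).1 <= x -> x <= (ptR B a).1 -> hE B (south (x, a.2)) = hE B (x, a.2).
  move=> le_Lx le_xR; have [Vx nLx] := nL_row (x, a.2) (conj erefl (conj le_Lx le_xR)).
  exact: no_L0_row_hE_south.
split=> //.
- apply: ptL_uniq => //=; first by rewrite L2.
    by move=> x le_Lx lt_xa; rewrite [hE B _]hE_south; [apply: hE_L | lia | lia].
  have [VL nLL] := nL_row _ (ptL_row_seg hB Va).
  exact: no_L0_row_west_south.
- apply: ptR_uniq => //=; first by rewrite R2.
    by move=> x le_ax lt_xR; rewrite [hE B _]hE_south; [apply: hE_R | lia | lia].
  have [VR nLR] := nL_row _ (ptR_row_seg hB Va).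
  by rewrite no_L0_row_hE_south.
Qed.

(** * The retraction onto the large tilt graph *)

Definition westL0 (v : pixel) : pixel :=
  walk west (fun q => ~~ asbool (L0_col q)) (size V) v.
Definition southL0 (v : pixel) : pixel :=
  walk south (fun q => ~~ asbool (L0_row q)) (size V) v.

Let westL0_step q : q \in V -> ~~ asbool (L0_col q) -> west q \in V.
Proof. by move=> Vq /asboolP nLq; have [] := no_L0_col_shift_west Vq nLq. Qed.
Let southL0_step q : q \in V -> ~~ asbool (L0_row q) -> south q \in V.
Proof. by move=> Vq /asboolP nLq; have [] := no_L0_row_shift_south Vq nLq. Qed.

Lemma westL0_spec (v : pixel) : v \in V ->
  [/\ (westL0 v).2 = v.2, (westL0 v).1 <= v.1,
    forall x, (westL0 v).1 < x -> x <= v.1 -> (x, v.2) \in V /\ ~ L0_col (x, v.2),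
    L0_col (westL0 v) & westL0 v \in V].
Proof.
move=> Vv; have [w2 le_w nL_w mem_w stop_w] :=
  walk_end (f := fun q => - q.1) (g := fun q => q.2)
    west_opp1 (fun _ => erefl) pixE_west westL0_step Vv.
rewrite -/(westL0 v) in w2 le_w nL_w mem_w stop_w; split=> //; first lia.
- move=> x lt_wx le_xv; split; first by apply: mem_w => /=; lia.
  by apply: (elimN (asboolP _)); apply: nL_w => /=; lia.
- by move: stop_w; rewrite negbK => /asboolP.
- by rewrite [westL0 v]surjective_pairing; apply: mem_w => /=; lia.
Qed.

Lemma southL0_spec (v : pixel) : v \in V ->
  [/\ (southL0 v).1 = v.1, (southL0 v).2 <= v.2,
    forall y, (southL0 v).2 < y -> y <= v.2 -> (v.1, y) \in V /\ ~ L0_row (v.1, y),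
    L0_row (southL0 v) & southL0 v \in V].
Proof.
move=> Vv; have [s1 le_s nL_s mem_s stop_s] :=
  walk_end (f := fun q => - q.2) (g := fun q => q.1)
    south_opp2 (fun _ => erefl) pixE_south southL0_step Vv.
rewrite -/(southL0 v) in s1 le_s nL_s mem_s stop_s; split=> //; first lia.
- move=> y lt_sy le_yv; split; first by apply: mem_s => /=; lia.
  by apply: (elimN (asboolP _)); apply: nL_s => /=; lia.
- by move: stop_s; rewrite negbK => /asboolP.
- by rewrite [southL0 v]surjective_pairing; apply: mem_s => /=; lia.
Qed.

Lemma westL0_uniq (v r : pixel) : v \in V -> r.2 = v.2 -> r.1 <= v.1 ->
  (forall x, r.1 < x -> x <= v.1 -> ~ L0_col (x, v.2)) -> L0_col r -> westL0 v = r.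
Proof.
move=> Vv r2 le_rv nL_r L_r.
apply: (walk_end_uniq (f := fun q => - q.1) (g := fun q => q.2)
  west_opp1 (fun _ => erefl) pixE_west westL0_step Vv) => //=; first lia.
- by move=> -[x y] /= -> *; apply/asboolP/nL_r; lia.
- by rewrite negbK; apply/asboolP.
Qed.

Lemma southL0_uniq (v r : pixel) : v \in V -> r.1 = v.1 -> r.2 <= v.2 ->
  (forall y, r.2 < y -> y <= v.2 -> ~ L0_row (v.1, y)) -> L0_row r -> southL0 v = r.
Proof.
move=> Vv r1 le_rv nL_r L_r.
apply: (walk_end_uniq (f := fun q => - q.2) (g := fun q => q.1)
  south_opp2 (fun _ => erefl) pixE_south southL0_step Vv) => //=; first lia.
- by move=> -[x y] /= -> *; apply/asboolP/nL_r; lia.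
- by rewrite negbK; apply/asboolP.
Qed.

Lemma westL0_id (v : pixel) : v \in V -> L0_col v -> westL0 v = v.
Proof. by move=> Vv L_v; apply: westL0_uniq => // x *; lia. Qed.

Lemma southL0_id (v : pixel) : v \in V -> L0_row v -> southL0 v = v.
Proof. by move=> Vv L_v; apply: southL0_uniq => // y *; lia. Qed.

Lemma westL0_shift (v : pixel) x : v \in V -> (westL0 v).1 <= x -> x <= v.1 ->
  [/\ (x, v.2) \in V, ptU B (x, v.2) = (x, (ptU B v).2) & ptD B (x, v.2) = (x, (ptD B v).2)].
Proof.
move=> Vv le_wx le_xv; have [_ _ nL_w _ _] := westL0_spec Vv.
have [n def_x] : exists n : nat, x = v.1 - n%:Z by exists (absz (v.1 - x)); lia.
move: le_wx le_xv; rewrite def_x {def_x x}; elim: n => [|n IH] le_wn le_nv.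
  have [U1 _ _ _ _] := ptU_spec hB Vv; have [D1 _ _ _ _] := ptD_spec hB Vv.
  by rewrite subr0 -surjective_pairing; split=> //; apply: pixE.
have [Vn Un Dn] := IH ltac:(lia) ltac:(lia).
have [_ nLn] := nL_w (v.1 - n%:Z) ltac:(lia) ltac:(lia).
have [Vw Uw Dw] := no_L0_col_shift_west Vn nLn.
rewrite (_ : v.1 - n.+1%:Z = v.1 - n%:Z - 1); last lia.
by rewrite Uw Dw Un Dn.
Qed.

Lemma southL0_shift (v : pixel) y : v \in V -> (southL0 v).2 <= y -> y <= v.2 ->
  [/\ (v.1, y) \in V, ptL B (v.1, y) = ((ptL B v).1, y) & ptR B (v.1, y) = ((ptR B v).1, y)].
Proof.
move=> Vv le_sy le_yv; have [_ _ nL_s _ _] := southL0_spec Vv.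
have [n def_y] : exists n : nat, y = v.2 - n%:Z by exists (absz (v.2 - y)); lia.
move: le_sy le_yv; rewrite def_y {def_y y}; elim: n => [|n IH] le_sn le_nv.
  have [L2 _ _ _ _] := ptL_spec hB Vv; have [R2 _ _ _ _] := ptR_spec hB Vv.
  by rewrite subr0 -surjective_pairing; split=> //; apply: pixE.
have [Vn Ln Rn] := IH ltac:(lia) ltac:(lia).
have [_ nLn] := nL_s (v.2 - n%:Z) ltac:(lia) ltac:(lia).
have [Vs Ls Rs] := no_L0_row_shift_south Vn nLn.
rewrite (_ : v.2 - n.+1%:Z = v.2 - n%:Z - 1); last lia.
by rewrite Ls Rs Ln Rn.
Qed.

Lemma westL0E (v : pixel) : v \in V -> westL0 v = ((westL0 v).1, v.2).
Proof. by move=> Vv; have [<- _ _ _ _] := westL0_spec Vv; rewrite -surjective_pairing. Qed.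

Lemma southL0E (v : pixel) : v \in V -> southL0 v = (v.1, (southL0 v).2).
Proof. by move=> Vv; have [<- _ _ _ _] := southL0_spec Vv; rewrite -surjective_pairing. Qed.

Lemma westL0_row_seg (v : pixel) : v \in V -> in_row_seg B v (westL0 v).
Proof.
move=> Vv; have [w2 le_wv nL_w _ _] := westL0_spec Vv.
apply: row_seg_westward => // x le_wx lt_xv; have [Vx nLx] := nL_w (x + 1) ltac:(lia) ltac:(lia).
by rewrite -westS; apply: no_L0_col_hE_west Vx nLx.
Qed.

Lemma southL0_col_seg (v : pixel) : v \in V -> in_col_seg B v (southL0 v).
Proof.
move=> Vv; have [s1 le_sv nL_s _ _] := southL0_spec Vv.
apply: col_seg_southward => // y le_sy lt_yv; have [Vy nLy] := nL_s (y + 1) ltac:(lia) ltac:(lia).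
by rewrite -southS; apply: no_L0_row_vE_south Vy nLy.
Qed.

Lemma westL0_col_seg_shift (v v' : pixel) x : v \in V -> in_col_seg B v v' ->
  (westL0 v).1 <= x -> x <= v.1 -> in_col_seg B (x, v.2) (x, v'.2).
Proof.
move=> Vv [_ [le_Dv' le_v'U]] le_wx le_xv; rewrite /in_col_seg.
by have [_ -> ->] := westL0_shift Vv le_wx le_xv.
Qed.

Lemma southL0_row_seg_shift (v v' : pixel) y : v \in V -> in_row_seg B v v' ->
  (southL0 v).2 <= y -> y <= v.2 -> in_row_seg B (v.1, y) (v'.1, y).
Proof.
move=> Vv [_ [le_Lv' le_v'R]] le_sy le_yv; rewrite /in_row_seg.
by have [_ -> ->] := southL0_shift Vv le_sy le_yv.
Qed.

Lemma westL0_col (v v' : pixel) : v \in V -> in_col_seg B v v' ->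
  westL0 v' = ((westL0 v).1, v'.2).
Proof.
move=> Vv vv'; have Vv' := mem_col_seg hB Vv vv'; have [v'1 _] := vv'.
have [w2 le_wv nL_w L_w Vw] := westL0_spec Vv.
apply: westL0_uniq => //=; first lia.
- move=> x lt_wx le_xv; have [Vx nLx] := nL_w x lt_wx ltac:(lia).
  by move/(L0_col_seg Vx (westL0_col_seg_shift (x := x) Vv vv' ltac:(lia) ltac:(lia))).
- apply: L0_col_trans (westL0_col_seg_shift (x := (westL0 v).1) Vv vv' ltac:(lia) le_wv) _.
  by rewrite -westL0E.
Qed.

Lemma southL0_row (v v' : pixel) : v \in V -> in_row_seg B v v' ->
  southL0 v' = (v'.1, (southL0 v).2).
Proof.
move=> Vv vv'; have Vv' := mem_row_seg hB Vv vv'; have [v'2 _] := vv'.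
have [s1 le_sv nL_s L_s Vs] := southL0_spec Vv.
apply: southL0_uniq => //=; first lia.
- move=> y lt_sy le_yv; have [Vy nLy] := nL_s y lt_sy ltac:(lia).
  by move/(L0_row_seg Vy (southL0_row_seg_shift (y := y) Vv vv' ltac:(lia) ltac:(lia))).
- apply: L0_row_trans (southL0_row_seg_shift (y := (southL0 v).2) Vv vv' ltac:(lia) le_sv) _.
  by rewrite -southL0E.
Qed.

Definition retract (v : pixel) : pixel := ((westL0 v).1, (southL0 v).2).

Lemma retract_seg (v : pixel) : v \in V ->
  in_col_seg B (westL0 v) (retract v) /\ in_row_seg B (southL0 v) (retract v).
Proof.
move=> Vv; have [w2 le_wv _ _ _] := westL0_spec Vv; have [s1 le_sv _ _ _] := southL0_spec Vv.
split.
- rewrite [westL0 v]surjective_pairing w2.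
  exact: (westL0_col_seg_shift (x := (westL0 v).1) Vv (southL0_col_seg Vv) ltac:(lia) le_wv).
- rewrite [southL0 v]surjective_pairing s1.
  exact: (southL0_row_seg_shift (y := (southL0 v).2) Vv (westL0_row_seg Vv) ltac:(lia) le_sv).
Qed.

Lemma retract_Lvert (v : pixel) : v \in V -> Lvert B S (retract v).
Proof.
move=> Vv; have [_ _ _ L_w Vw] := westL0_spec Vv; have [_ _ _ L_s Vs] := southL0_spec Vv.
have [wr sr] := retract_seg Vv; apply/LvertE; split.
- exact: (mem_col_seg hB Vw wr).
- exact: (L0_row_trans sr L_s).
- exact: (L0_col_trans wr L_w).
Qed.

Lemma retract_id (v : pixel) : Lvert B S v -> retract v = v.
Proof.
by move=> /LvertE[Vv L_row L_col]; rewrite /retract westL0_id // southL0_id // -surjective_pairing.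
Qed.

Lemma retract_ptL (v : pixel) : v \in V -> retract (ptL B v) = ptL B (retract v).
Proof.
move=> Vv; have vL := ptL_row_seg hB Vv; have VL := mem_row_seg hB Vv vL.
have [_ _ _ _ stop_L] := ptL_spec hB Vv; have [_ le_sv _ _ Vs] := southL0_spec Vv.
have [_ eL _] := southL0_shift (y := (southL0 v).2) Vv ltac:(lia) le_sv; rewrite -southL0E // in eL.
have [_ sr] := retract_seg Vv.
rewrite (row_seg_ptL hB Vs sr) eL /retract (southL0_row Vv vL) /=.
by rewrite westL0_id //; apply: L0_col_west_boundary.
Qed.

Lemma retract_ptR (v : pixel) : v \in V -> retract (ptR B v) = ptR B (retract v).
Proof.
move=> Vv; have vR := ptR_row_seg hB Vv; have VR := mem_row_seg hB Vv vR.
have [_ _ _ _ stop_R] := ptR_spec hB Vv; have [_ le_sv _ _ Vs] := southL0_spec Vv.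
have [_ _ eR] := southL0_shift (y := (southL0 v).2) Vv ltac:(lia) le_sv; rewrite -southL0E // in eR.
have [_ sr] := retract_seg Vv.
rewrite (row_seg_ptR hB Vs sr) eR /retract (southL0_row Vv vR) /=.
by rewrite westL0_id //; apply: L0_col_east_boundary.
Qed.

Lemma retract_ptU (v : pixel) : v \in V -> retract (ptU B v) = ptU B (retract v).
Proof.
move=> Vv; have vU := ptU_col_seg hB Vv; have VU := mem_col_seg hB Vv vU.
have [_ _ _ _ stop_U] := ptU_spec hB Vv; have [_ le_wv _ _ Vw] := westL0_spec Vv.
have [_ eU _] := westL0_shift (x := (westL0 v).1) Vv ltac:(lia) le_wv; rewrite -westL0E // in eU.
have [wr _] := retract_seg Vv.
rewrite (col_seg_ptU hB Vw wr) eU /retract (westL0_col Vv vU) /=.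
by rewrite southL0_id //; apply: L0_row_north_boundary.
Qed.

Lemma retract_ptD (v : pixel) : v \in V -> retract (ptD B v) = ptD B (retract v).
Proof.
move=> Vv; have vD := ptD_col_seg hB Vv; have VD := mem_col_seg hB Vv vD.
have [_ _ _ _ stop_D] := ptD_spec hB Vv; have [_ le_wv _ _ Vw] := westL0_spec Vv.
have [_ _ eD] := westL0_shift (x := (westL0 v).1) Vv ltac:(lia) le_wv; rewrite -westL0E // in eD.
have [wr _] := retract_seg Vv.
rewrite (col_seg_ptD hB Vw wr) eD /retract (westL0_col Vv vD) /=.
by rewrite southL0_id //; apply: L0_row_south_boundary.
Qed.

Lemma retract_edge (v u : pixel) :
  fedge B v u -> retract v = retract u \/ fedge B (retract v) (retract u).
Proof.
move=> [Vv [tilt _]]; have [VR _ _] := (LvertE (retract v)).1 (retract_Lvert Vv).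
case: (eqVneq (retract v) (retract u)) => [|neq]; [by left | right].
split=> //; split; last by apply/eqP; rewrite eq_sym.
move: tilt; rewrite !inE => /or4P[] /eqP ->.
- by rewrite retract_ptL // eqxx.
- by rewrite retract_ptR // eqxx orbT.
- by rewrite retract_ptU // eqxx !orbT.
- by rewrite retract_ptD // eqxx !orbT.
Qed.

End LargeTiltGraph.

Theorem mainTheorem10 (B : board) (S : seq pixel) (w : nat)
  (par : pixel -> option pixel) :
  is_board B -> {subset S <= bV B} ->
  is_arborescence (GF_vert B) (fedge B) S par ->
  arb_weight (GF_vert B) (fedge B) S par w ->
  exists (par' : pixel -> option pixel) (w' : nat),
    is_arborescence (Lvert B S) (fedge B) S par' /\
    arb_weight (Lvert B S) (fedge B) S par' w' /\ (w' <= w)%N.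
Proof.
move=> hB hS; apply: (arborescence_retract (pi := retract B S)).
- by move=> p [].
- exact: sink_Lvert.
- exact: retract_Lvert.
- exact: retract_id.
- exact: retract_edge.
Qed.
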